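(* Let $n\ge0$ and $k\ge1$ be integers, $\rho\ne0$ real, $0\le q<1$, and $z$ a complex number. Then $$\sum_{m=0}^n S_1\!\left(n,m,\frac{z}{\rho}\right)\rho^{-m}B_{m,\rho,q}^{(k)}(z)=\frac{n!}{\rho^n[n+1]_q^k},$$ $$\sum_{m=0}^n S_2\!\left(n,m,\frac{z}{\rho}\right)\rho^{-m}c_{m,\rho,q}^{(k)}(z)=\frac{1}{\rho^n[n+1]_q^k},$$ $$\sum_{m=0}^n S_2\!\left(n,m,-\frac{z}{\rho}\right)\rho^{-m}\widehat c_{m,\rho,q}^{(k)}(z)=\frac{(-1)^n}{\rho^n[n+1]_q^k}.$$
   Context: For real $0\le q<1$ (with $0^0=1$), $[x]_q=\frac{1-q^x}{1-q}$. ${\rm Li}_{k,q}(w)=\sum_{m\ge1}w^m/[m]_q^k$. The $q$-poly-Bernoulli polynomials with parameter $\rho$: $\frac{\rho}{1-e^{-\rho t}}{\rm Li}_{k,q}\left(\frac{1-e^{-\rho t}}{\rho}\right)e^{-tz}=\sum_{n\ge0} B_{n,\rho,q}^{(k)}(z)\frac{t^n}{n!}$ (formal power series in $t$). Jackson's $q$-integral: $\int_0^1 f(x)\,d_qx=(1-q)\sum_{j\ge0} f(q^j)q^j$; multiple integrals are iterated. $(x)_n=x(x-1)\cdots(x-n+1)$, $(x)_0=1$. The $q$-poly-Cauchy polynomials of the first and second kind with parameter $\rho$ are $c_{n,\rho,q}^{(k)}(z)=\rho^n\int_0^1\cdots\int_0^1\left(\frac{x_1\cdots x_k-z}{\rho}\right)_n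 d_qx_1\cdots d_qx_k$ and $\widehat c_{n,\rho,q}^{(k)}(z)=\rho^n\int_0^1\cdots\int_0^1\left(\frac{-x_1\cdots x_k+z}{\rho}\right)_n d_qx_1\cdots d_qx_k$ ($k$-fold). Weighted Stirling numbers (Carlitz): $\frac{(1-t)^{-x}(-\ln(1-t))^m}{m!}=\sum_{n\ge0}S_1(n,m,x)\frac{t^n}{n!}$ and $\frac{e^{xt}(e^t-1)^m}{m!}=\sum_{n\ge0}S_2(n,m,x)\frac{t^n}{n!}$. *)

From Stdlib Require Import Reals Factorial ClassicalEpsilon.
Open Scope R_scope.

Definition Cx : Type := (R * R)%type.
Definition RtoC (r : R) : Cx := (r, 0).
Definition Cadd (a b : Cx) : Cx := (fst a + fst b, snd a + snd b).
Definition Copp (a : Cx) : Cx := (- fst a, - snd a).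
Definition Csub (a b : Cx) : Cx := Cadd a (Copp b).
Definition Cmul (a b : Cx) : Cx :=
  (fst a * fst b - snd a * snd b, fst a * snd b + snd a * fst b).
Definition Cscal (r : R) (a : Cx) : Cx := (r * fst a, r * snd a).
Definition C0 : Cx := RtoC 0.
Definition C1 : Cx := RtoC 1.

(** [Csum F n] = F 0 + F 1 + ... + F n  (n+1 terms, like sum_f_R0) *)
Fixpoint Csum (F : nat -> Cx) (n : nat) : Cx :=
  match n with
  | O => F O
  | S n' => Cadd (Csum F n') (F (S n'))
  end.

Definition fps : Type := nat -> Cx.
Definition fps_add (f g : fps) : fps := fun n => Cadd (f n) (g n).
Definition fps_sub (f g : fps) : fps := fun n => Csub (f n) (g n).
Definition fps_cscal (c : Cx) (f : fps) : fps := fun n => Cmul c (f n).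
Definition fps_rscal (r : R) (f : fps) : fps := fun n => Cscal r (f n).
Definition fps_const (c : Cx) : fps := fun n => match n with O => c | _ => C0 end.
Definition fps_one : fps := fps_const C1.
Definition fps_X : fps := fun n => match n with 1%nat => C1 | _ => C0 end.
Definition fps_mul (f g : fps) : fps :=
  fun n => Csum (fun i => Cmul (f i) (g (n - i)%nat)) n.
Fixpoint fps_pow (f : fps) (j : nat) : fps :=
  match j with O => fps_one | S j' => fps_mul (fps_pow f j') f end.
(** exp(F) = sum_j F^j / j!  for a series F with zero constant term
    (only used for such F; the coefficient of t^n only involves j <= n). *)
Definition fps_exp (f : fps) : fps :=
  fun n => Csum (fun j => Cscal (/ INR (fact j)) (fps_pow f j n)) n.
(** -ln(1-t) = sum_{i>=1} t^i / i *)
Definition fps_mlog1m : fps :=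
  fun n => match n with O => C0 | _ => RtoC (/ INR n) end.

(** (1-t)^{-x} (-ln(1-t))^m / m! = sum_n S1(n,m,x) t^n/n!,
    with (1-t)^{-x} := exp(x * (-ln(1-t))) *)
Definition S1w (n m : nat) (x : Cx) : Cx :=
  Cscal (INR (fact n))
    (fps_mul (fps_exp (fps_cscal x fps_mlog1m))
             (fps_rscal (/ INR (fact m)) (fps_pow fps_mlog1m m)) n).
(** e^{xt} (e^t - 1)^m / m! = sum_n S2(n,m,x) t^n/n! *)
Definition S2w (n m : nat) (x : Cx) : Cx :=
  Cscal (INR (fact n))
    (fps_mul (fps_exp (fps_cscal x fps_X))
             (fps_rscal (/ INR (fact m))
                (fps_pow (fps_sub (fps_exp fps_X) fps_one) m)) n).

Definition qnum (q : R) (x : nat) : R := (1 - q ^ x) / (1 - q).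

Definition fps_w (rho : R) : fps :=
  fps_rscal (/ rho) (fps_sub fps_one (fps_exp (fps_rscal (- rho) fps_X))).
(** rho/(1-e^{-rho t}) * Li_{k,q}(w) = (1/w) * sum_{m>=1} w^m/[m]_q^k
    = sum_{m>=1} w^(m-1)/[m]_q^k ; the coefficient of t^n only involves
    m <= n+1 (w has zero constant term). *)
Definition fps_Li_over_w (k : nat) (rho q : R) : fps :=
  fun n => Csum (fun j => Cscal (/ (qnum q (S j)) ^ k) (fps_pow (fps_w rho) j n)) n.
(** generating function: rho/(1-e^{-rho t}) Li_{k,q}(...) e^{-tz}
                         = sum_n B_{n,rho,q}^{(k)}(z) t^n / n! *)
Definition qpolyBernoulli (n k : nat) (rho q : R) (z : Cx) : Cx :=
  Cscal (INR (fact n))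
    (fps_mul (fps_Li_over_w k rho q) (fps_exp (fps_cscal (Copp z) fps_X)) n).

Definition Rseries (a : nat -> R) : R :=
  epsilon (inhabits 0) (fun l => infinite_sum a l).
(** int_0^1 f(x) d_q x = (1-q) sum_{j>=0} f(q^j) q^j, for complex-valued f *)
Definition jackson (q : R) (f : R -> Cx) : Cx :=
  ((1 - q) * Rseries (fun j => fst (f (q ^ j)) * q ^ j),
   (1 - q) * Rseries (fun j => snd (f (q ^ j)) * q ^ j)).
(** k-fold iterated Jackson integral of an integrand depending on the product
    x_1 ... x_k:   jackson_multi q k F = int ... int F(x_1 ... x_k) d_qx_1 ... d_qx_k
    (outer integral in x_1, ..., innermost in x_k). *)
Fixpoint jackson_multi (q : R) (k : nat) (F : R -> Cx) : Cx :=
  match k with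
  | O => F 1
  | S k' => jackson q (fun x => jackson_multi q k' (fun y => F (x * y)))
  end.

Fixpoint Cfall (x : Cx) (n : nat) : Cx :=
  match n with
  | O => C1
  | S n' => Cmul (Cfall x n') (Csub x (RtoC (INR n')))
  end.

Definition qpolyCauchy1 (n k : nat) (rho q : R) (z : Cx) : Cx :=
  Cscal (rho ^ n)
    (jackson_multi q k (fun P => Cfall (Cscal (/ rho) (Csub (RtoC P) z)) n)).
Definition qpolyCauchy2 (n k : nat) (rho q : R) (z : Cx) : Cx :=
  Cscal (rho ^ n)
    (jackson_multi q k (fun P => Cfall (Cscal (/ rho) (Csub z (RtoC P))) n)).

(* Everything is read off exponential generating functions.  Differentiating the
   generating functions of the weighted Stirling numbers as formal power series gives
   their triangular recurrences, hence the falling-factorial expansion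
   (x + y)^n = sum_m S2(n,m,x) (y)_m and the orthogonality
   sum_m (-1)^m S1(n,m,x) S2(m,j,x) = (-1)^n [j = n].
   With w = (1 - e^{-rho t})/rho, the series w^j e^{-zt} is j! (-1/rho)^j times the
   generating function of S2(., j, z/rho) evaluated at u = -rho t, so
   rho^{-m} B_m = sum_j (-1)^m S2(m,j,z/rho) j! (-1/rho)^j / [j+1]_q^k, and
   orthogonality keeps only the term j = n.
   For the Cauchy polynomials the falling-factorial expansion turns the integrand into
   (x_1...x_k/rho)^n (resp. (-x_1...x_k/rho)^n), and the k-fold Jackson integral of t^n
   is [n+1]_q^{-k}; the finite sum commutes with the Jackson integrals because every
   integrand is bounded on [0,1]. *)

From Pilot Require Import Defs.
From Stdlib Require Import Reals Factorial Lra Lia FunctionalExtensionality ClassicalEpsilon.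
From Coquelicot Require Hierarchy Series.
From HB Require Import structures.
From mathcomp Require all_boot all_algebra.
From mathcomp Require boolp ring.
Open Scope R_scope.

Lemma INR_fact_succ_inv j : INR (S j) * / INR (fact (S j)) = / INR (fact j).
Proof.
pose proof (INR_fact_neq_0 j).
assert (INR (S j) <> 0) by (apply not_0_INR; discriminate).
rewrite fact_simpl, mult_INR; field; split; assumption.
Qed.

Lemma opp_mul_inv rho : rho <> 0 -> - rho * / rho = - (1).
Proof. intro; field; assumption. Qed.

Lemma fact_pow_opp_inv_cancel rho j : rho <> 0 ->
  INR (fact j) * (- / rho) ^ j * (/ INR (fact j) * (- rho) ^ j) = 1.
Proof.
intro Hrho; pose proof (INR_fact_neq_0 j).
replace (INR (fact j) * (- / rho) ^ j * (/ INR (fact j) * (- rho) ^ j))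
  with (INR (fact j) * / INR (fact j) * (- / rho * - rho) ^ j)
  by (rewrite Rpow_mult_distr; ring).
replace (- / rho * - rho) with 1 by (field; assumption).
rewrite pow1, Rinv_r by assumption; ring.
Qed.

Lemma inv_pow_mul_opp_pow rho m : rho <> 0 -> / rho ^ m * (- rho) ^ m = (-1) ^ m.
Proof.
intro; rewrite <- pow_inv, <- Rpow_mult_distr; f_equal; field; assumption.
Qed.

Lemma fact_pow_opp_inv_sign rho Q k n : rho <> 0 ->
  / Q ^ k * (INR (fact n) * (- / rho) ^ n) * (-1) ^ n = INR (fact n) / (rho ^ n * Q ^ k).
Proof.
intro Hrho.
replace ((- / rho) ^ n) with ((-1) ^ n * / rho ^ n)
  by (rewrite <- pow_inv, <- Rpow_mult_distr; f_equal; ring).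
unfold Rdiv; rewrite Rinv_mult.
transitivity (INR (fact n) * / rho ^ n * / Q ^ k * (-1 * -1) ^ n).
- rewrite Rpow_mult_distr; ring.
- replace (-1 * -1) with 1 by ring; rewrite pow1; ring.
Qed.

Lemma pow_opp_inv_mul rho P n : (- (/ rho * P)) ^ n = P ^ n * ((-1) ^ n / rho ^ n).
Proof.
replace (- (/ rho * P)) with (-1 * / rho * P) by ring.
rewrite !Rpow_mult_distr, pow_inv; unfold Rdiv; ring.
Qed.

Module JacksonIntegral.
Import Coquelicot.Hierarchy Coquelicot.Series.

Lemma infinite_sum_plus a b la lb : infinite_sum a la -> infinite_sum b lb ->
  infinite_sum (fun n => a n + b n) (la + lb).
Proof.
intros Ha Hb; apply is_series_Reals; apply is_series_Reals in Ha, Hb.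
exact (is_series_plus a b la lb Ha Hb).
Qed.

Lemma infinite_sum_scal c a l : infinite_sum a l -> infinite_sum (fun n => c * a n) (c * l).
Proof.
intros Ha; apply is_series_Reals; apply is_series_Reals in Ha.
exact (is_series_scal_l c a l Ha).
Qed.

Lemma infinite_sum_ext a b l : (forall n, a n = b n) -> infinite_sum a l -> infinite_sum b l.
Proof. intros E H; replace b with a by (apply functional_extensionality; exact E); exact H. Qed.

Lemma Rseries_unique a l : infinite_sum a l -> Rseries a = l.
Proof.
intros H; apply (uniqueness_sum a); [|exact H].
apply (epsilon_spec (inhabits 0) (fun l => infinite_sum a l)); exists l; exact H.
Qed.

Lemma infinite_sum_geometric_bound q M a : 0 <= q < 1 ->
  (forall j, Rabs (a j) <= M * q ^ j) -> exists l, infinite_sum a l /\ Rabs l <= M / (1 - q).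
Proof.
intros Hq Ha.
assert (Hg : is_series (fun j => M * q ^ j) (M / (1 - q))).
{ apply (is_series_scal_l M (fun j => q ^ j)), is_series_geom. rewrite Rabs_right; lra. }
assert (Habs : ex_series (fun j => Rabs (a j))).
{ apply (ex_series_le (fun j => Rabs (a j)) (fun j => M * q ^ j)); [|eexists; exact Hg].
  intros j; unfold norm; simpl; rewrite Rabs_Rabsolu; apply Ha. }
assert (Hex : ex_series a) by (apply ex_series_Rabs; exact Habs).
exists (Series a); split.
- apply is_series_Reals, Series_correct, Hex.
- apply Rle_trans with (Series (fun j => Rabs (a j))); [apply Series_Rabs, Habs|].
  rewrite <- (is_series_unique _ _ Hg).
  apply Series_le; [|eexists; exact Hg].
  intros j; split; [apply Rabs_pos|apply Ha].
Qed.

Lemma mult_unit_interval x y : 0 <= x <= 1 -> 0 <= y <= 1 -> 0 <= x * y <= 1.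
Proof.
intros; split; [apply Rmult_le_pos|rewrite <- (Rmult_1_l 1); apply Rmult_le_compat]; lra.
Qed.

Lemma pow_unit_interval x j : 0 <= x <= 1 -> 0 <= x ^ j <= 1.
Proof. intros; induction j; simpl; [lra|apply mult_unit_interval; assumption]. Qed.

(* All Jackson nodes q^j lie in [0,1]; boundedness there makes the Jackson series
   converge absolutely, which is all that linearity needs. *)
Definition bounded01_by (F : R -> Cx) (M : R) :=
  forall t, 0 <= t <= 1 -> Rabs (fst (F t)) <= M /\ Rabs (snd (F t)) <= M.
Definition bounded01 (F : R -> Cx) := exists M, bounded01_by F M.

Lemma bounded01_const c : bounded01 (fun _ => c).
Proof.
exists (Rabs (fst c) + Rabs (snd c)); intros t _.
pose proof (Rabs_pos (fst c)); pose proof (Rabs_pos (snd c)); lra.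
Qed.

Lemma bounded01_RtoC : bounded01 RtoC.
Proof. exists 1; intros t Ht; simpl; rewrite Rabs_R0, Rabs_right; lra. Qed.

Lemma bounded01_add F G : bounded01 F -> bounded01 G -> bounded01 (fun t => Cadd (F t) (G t)).
Proof.
intros [M1 H1] [M2 H2]; exists (M1 + M2); intros t Ht; destruct (H1 t Ht), (H2 t Ht).
simpl; split; eapply Rle_trans; try apply Rabs_triang; lra.
Qed.

Lemma bounded01_opp F : bounded01 F -> bounded01 (fun t => Copp (F t)).
Proof. intros [M H]; exists M; intros t Ht; simpl; rewrite !Rabs_Ropp; exact (H t Ht). Qed.

Lemma bounded01_sub F G : bounded01 F -> bounded01 G -> bounded01 (fun t => Csub (F t) (G t)).
Proof. intros; apply bounded01_add; [|apply bounded01_opp]; assumption. Qed.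

Lemma Rabs_mult_le a b M1 M2 : Rabs a <= M1 -> Rabs b <= M2 -> Rabs (a * b) <= M1 * M2.
Proof. intros; rewrite Rabs_mult; apply Rmult_le_compat; auto using Rabs_pos. Qed.

Lemma bounded01_mul F G : bounded01 F -> bounded01 G -> bounded01 (fun t => Cmul (F t) (G t)).
Proof.
intros [M1 H1] [M2 H2]; exists (M1 * M2 + M1 * M2); intros t Ht.
destruct (H1 t Ht), (H2 t Ht); simpl; split; unfold Rminus;
  eapply Rle_trans; try apply Rabs_triang; try rewrite Rabs_Ropp;
  apply Rplus_le_compat; apply Rabs_mult_le; assumption.
Qed.

Lemma bounded01_scal r F : bounded01 F -> bounded01 (fun t => Cscal r (F t)).
Proof.
intros [M H]; exists (Rabs r * M); intros t Ht; destruct (H t Ht); simpl.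
split; apply Rabs_mult_le; lra.
Qed.

Lemma bounded01_Cfall g m : bounded01 g -> bounded01 (fun t => Cfall (g t) m).
Proof.
intros Hg; induction m as [|m IH]; cbn [Cfall].
- apply bounded01_const.
- apply bounded01_mul; [exact IH|]; apply bounded01_sub; [exact Hg|apply bounded01_const].
Qed.

Lemma bounded01_lincomb (c : nat -> Cx) (F : nat -> R -> Cx) n : (forall m, bounded01 (F m)) ->
  bounded01 (fun t => Csum (fun m => Cmul (c m) (F m t)) n).
Proof.
intros HF; induction n as [|n IH]; cbn [Csum]; [|apply bounded01_add; [exact IH|]];
  (apply bounded01_mul; [apply bounded01_const|apply HF]).
Qed.

Section Jackson.
Variable q : R.
Hypothesis Hq : 0 <= q < 1.

Lemma jackson_series (g : R -> R) M : (forall t, 0 <= t <= 1 -> Rabs (g t) <= M) ->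
  exists l, infinite_sum (fun j => g (q ^ j) * q ^ j) l /\ Rabs l <= M / (1 - q).
Proof.
intros Hg; apply infinite_sum_geometric_bound; [exact Hq|intros j].
pose proof (pow_unit_interval q j (conj (proj1 Hq) (Rlt_le _ _ (proj2 Hq)))).
rewrite Rabs_mult, (Rabs_right (q ^ j)) by lra.
apply Rmult_le_compat_r; [lra|]; apply Hg; assumption.
Qed.

Lemma jackson_bounded_by f M : bounded01_by f M ->
  Rabs (fst (jackson q f)) <= M /\ Rabs (snd (jackson q f)) <= M.
Proof.
intros Hf.
assert (bound : forall g : R -> R, (forall t, 0 <= t <= 1 -> Rabs (g t) <= M) ->
          Rabs ((1 - q) * Rseries (fun j => g (q ^ j) * q ^ j)) <= M).
{ intros g Hg; destruct (jackson_series g M Hg) as [l [Hl Bl]].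
  rewrite (Rseries_unique _ _ Hl), Rabs_mult, (Rabs_right (1 - q)) by lra.
  replace M with ((1 - q) * (M / (1 - q))) by (field; lra).
  apply Rmult_le_compat_l; lra. }
unfold jackson; simpl; split;
  [apply (bound (fun t => fst (f t)))|apply (bound (fun t => snd (f t)))];
  intros t Ht; apply (Hf t Ht).
Qed.

Lemma jackson_ext01 f g : (forall t, 0 <= t <= 1 -> f t = g t) -> jackson q f = jackson q g.
Proof.
intros H; assert (E : forall j, f (q ^ j) = g (q ^ j)).
{ intros j; apply H, pow_unit_interval; lra. }
unfold jackson; f_equal; f_equal; f_equal; apply functional_extensionality; intros j.
all: rewrite E; reflexivity.
Qed.

Lemma jackson_linear (c : Cx) f g : bounded01 f -> bounded01 g ->
  jackson q (fun t => Cadd (Cmul c (f t)) (g t)) = Cadd (Cmul c (jackson q f)) (jackson q g).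
Proof.
intros [M1 Hf] [M2 Hg].
destruct (jackson_series (fun t => fst (f t)) M1) as [a1 [S1 _]]; [intros t Ht; apply (Hf t Ht)|].
destruct (jackson_series (fun t => snd (f t)) M1) as [a2 [S2 _]]; [intros t Ht; apply (Hf t Ht)|].
destruct (jackson_series (fun t => fst (g t)) M2) as [b1 [T1 _]]; [intros t Ht; apply (Hg t Ht)|].
destruct (jackson_series (fun t => snd (g t)) M2) as [b2 [T2 _]]; [intros t Ht; apply (Hg t Ht)|].
destruct c as [c1 c2]; unfold jackson, Cadd, Cmul; simpl.
rewrite (Rseries_unique _ _ S1), (Rseries_unique _ _ S2),
  (Rseries_unique _ _ T1), (Rseries_unique _ _ T2).
f_equal.
- rewrite (Rseries_unique _ (c1 * a1 + - c2 * a2 + b1)); [ring|].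
  apply infinite_sum_ext with (fun n => c1 * (fst (f (q ^ n)) * q ^ n)
    + - c2 * (snd (f (q ^ n)) * q ^ n) + fst (g (q ^ n)) * q ^ n); [intros n; ring|].
  repeat apply infinite_sum_plus; try apply infinite_sum_scal; assumption.
- rewrite (Rseries_unique _ (c1 * a2 + c2 * a1 + b2)); [ring|].
  apply infinite_sum_ext with (fun n => c1 * (snd (f (q ^ n)) * q ^ n)
    + c2 * (fst (f (q ^ n)) * q ^ n) + snd (g (q ^ n)) * q ^ n); [intros n; ring|].
  repeat apply infinite_sum_plus; try apply infinite_sum_scal; assumption.
Qed.

Lemma bounded01_by_dilate F M x : 0 <= x <= 1 -> bounded01_by F M ->
  bounded01_by (fun y => F (x * y)) M.
Proof. intros Hx HF t Ht; apply HF, mult_unit_interval; assumption. Qed.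

Lemma jackson_multi_bounded_by k : forall F M, bounded01_by F M ->
  Rabs (fst (jackson_multi q k F)) <= M /\ Rabs (snd (jackson_multi q k F)) <= M.
Proof.
induction k as [|k IH]; intros F M HF; cbn [jackson_multi].
- apply HF; lra.
- apply jackson_bounded_by; intros x Hx; apply IH, bounded01_by_dilate; assumption.
Qed.

Lemma bounded01_jackson_multi k F : bounded01 F ->
  bounded01 (fun x => jackson_multi q k (fun y => F (x * y))).
Proof.
intros [M HF]; exists M; intros x Hx.
apply jackson_multi_bounded_by, bounded01_by_dilate; assumption.
Qed.

Lemma jackson_multi_linear k : forall (c : Cx) F G, bounded01 F -> bounded01 G ->
  jackson_multi q k (fun t => Cadd (Cmul c (F t)) (G t)) =
  Cadd (Cmul c (jackson_multi q k F)) (jackson_multi q k G).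
Proof.
induction k as [|k IH]; intros c F G HF HG; cbn [jackson_multi]; [reflexivity|].
rewrite (jackson_ext01 _ (fun x => Cadd (Cmul c (jackson_multi q k (fun y => F (x * y))))
                                      (jackson_multi q k (fun y => G (x * y))))).
- apply jackson_linear; apply bounded01_jackson_multi; assumption.
- intros x Hx; destruct HF as [M1 HF], HG as [M2 HG].
  apply IH; [exists M1|exists M2]; apply bounded01_by_dilate; assumption.
Qed.

Lemma jackson_monomial i d : jackson q (fun t => Cscal (t ^ i) d) = Cscal (/ qnum q (S i)) d.
Proof.
pose proof (pow_lt_1_compat q (S i) Hq (Nat.lt_0_succ i)) as Hqi.
assert (HG : infinite_sum (fun j => (q ^ S i) ^ j) (/ (1 - q ^ S i))).
{ apply infinite_sum_ext with (fun j => 1 * (q ^ S i) ^ j); [intros; ring|].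
  apply GP_infinite; rewrite Rabs_right; lra. }
assert (Hterm : forall j, (q ^ j) ^ i * q ^ j = (q ^ S i) ^ j).
{ intros j; rewrite <- !pow_mult, <- pow_add; f_equal; lia. }
destruct d as [d1 d2]; unfold jackson, Cscal; simpl.
rewrite (Rseries_unique _ (d1 * / (1 - q ^ S i))), (Rseries_unique _ (d2 * / (1 - q ^ S i))).
- unfold qnum; f_equal; field; split; lra.
- apply infinite_sum_ext with (fun j => d2 * (q ^ S i) ^ j); [|apply infinite_sum_scal, HG].
  intros j; rewrite <- Hterm; ring.
- apply infinite_sum_ext with (fun j => d1 * (q ^ S i) ^ j); [|apply infinite_sum_scal, HG].
  intros j; rewrite <- Hterm; ring.
Qed.

Lemma Cscal_Cscal r s a : Cscal r (Cscal s a) = Cscal (r * s) a.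
Proof. destruct a; unfold Cscal; simpl; f_equal; ring. Qed.

Lemma jackson_multi_monomial k : forall i d,
  jackson_multi q k (fun t => Cscal (t ^ i) d) = Cscal (/ qnum q (S i) ^ k) d.
Proof.
induction k as [|k IH]; intros i d; cbn [jackson_multi].
- rewrite pow1; simpl pow; rewrite Rinv_1; reflexivity.
- replace (fun x => jackson_multi q k (fun y => Cscal ((x * y) ^ i) d))
    with (fun x => Cscal (x ^ i) (Cscal (/ qnum q (S i) ^ k) d)).
  + rewrite jackson_monomial, Cscal_Cscal, <- Rinv_mult; reflexivity.
  + apply functional_extensionality; intros x.
    replace (fun y => Cscal ((x * y) ^ i) d) with (fun y => Cscal (y ^ i) (Cscal (x ^ i) d)).
    * rewrite IH, !Cscal_Cscal; f_equal; ring.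
    * apply functional_extensionality; intros y.
      rewrite Cscal_Cscal, Rpow_mult_distr; f_equal; ring.
Qed.

Lemma jackson_multi_zero k : jackson_multi q k (fun _ => C0) = C0.
Proof.
replace (fun _ : R => C0) with (fun t => Cscal (t ^ 0) C0)
  by (apply functional_extensionality; intros t; unfold Cscal, C0, RtoC; simpl; f_equal; ring).
rewrite jackson_multi_monomial; unfold Cscal, C0, RtoC; simpl; f_equal; ring.
Qed.

Lemma jackson_multi_sum k (F : nat -> R -> Cx) (c : nat -> Cx) n : (forall m, bounded01 (F m)) ->
  jackson_multi q k (fun t => Csum (fun m => Cmul (c m) (F m t)) n) =
  Csum (fun m => Cmul (c m) (jackson_multi q k (F m))) n.
Proof.
assert (Cadd_C0 : forall a, Cadd a C0 = a)
  by (intros []; unfold Cadd, C0, RtoC; simpl; f_equal; ring).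
assert (Cadd_comm : forall a b, Cadd a b = Cadd b a)
  by (intros [] []; unfold Cadd; simpl; f_equal; ring).
intros HF; induction n as [|n IH]; cbn [Csum].
- replace (fun t => Cmul (c 0%nat) (F 0%nat t)) with (fun t => Cadd (Cmul (c 0%nat) (F 0%nat t)) C0)
    by (apply functional_extensionality; intros t; apply Cadd_C0).
  rewrite jackson_multi_linear, jackson_multi_zero, Cadd_C0;
    [reflexivity|apply HF|apply bounded01_const].
- replace (fun t => Cadd (Csum (fun m => Cmul (c m) (F m t)) n) (Cmul (c (S n)) (F (S n) t)))
    with (fun t => Cadd (Cmul (c (S n)) (F (S n) t)) (Csum (fun m => Cmul (c m) (F m t)) n))
    by (apply functional_extensionality; intros t; apply Cadd_comm).
  rewrite jackson_multi_linear, IH, Cadd_comm; [reflexivity|apply HF|apply bounded01_lincomb, HF].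
Qed.

End Jackson.
End JacksonIntegral.

Module FormalSeries.
Import all_boot all_algebra.
Import GRing.Theory.

HB.instance Definition _ := boolp.gen_eqMixin Cx.
HB.instance Definition _ := boolp.gen_choiceMixin Cx.

Lemma CaddA : associative Cadd.
Proof. by move=> [a b] [c d] [e f]; rewrite /Cadd /=; f_equal; ring. Qed.
Lemma CaddC : commutative Cadd.
Proof. by move=> [a b] [c d]; rewrite /Cadd /=; f_equal; ring. Qed.
Lemma Cadd0 : left_id C0 Cadd.
Proof. by move=> [a b]; rewrite /Cadd /C0 /RtoC /=; f_equal; ring. Qed.
Lemma CaddN : left_inverse C0 Copp Cadd.
Proof. by move=> [a b]; rewrite /Cadd /C0 /RtoC /=; f_equal; ring. Qed.
HB.instance Definition _ := GRing.isZmodule.Build Cx CaddA CaddC Cadd0 CaddN.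

Lemma CmulA : associative Cmul.
Proof. by move=> [a b] [c d] [e f]; rewrite /Cmul /=; f_equal; ring. Qed.
Lemma CmulC : commutative Cmul.
Proof. by move=> [a b] [c d]; rewrite /Cmul /=; f_equal; ring. Qed.
Lemma Cmul1 : left_id Defs.C1 Cmul.
Proof. by move=> [a b]; rewrite /Cmul /C1 /RtoC /=; f_equal; ring. Qed.
Lemma CmulDl : left_distributive Cmul Cadd.
Proof. by move=> [a b] [c d] [e f]; rewrite /Cmul /Cadd /=; f_equal; ring. Qed.
Lemma C1_neq0 : Defs.C1 != C0.
Proof. by apply/eqP; case; exact: R1_neq_R0. Qed.
HB.instance Definition _ :=
  GRing.Zmodule_isComNzRing.Build Cx CmulA CmulC Cmul1 CmulDl C1_neq0.

Local Open Scope ring_scope.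

Lemma CaddE (a b : Cx) : Cadd a b = a + b. Proof. by []. Qed.
Lemma CsubE (a b : Cx) : Csub a b = a - b. Proof. by []. Qed.
Lemma CoppE (a : Cx) : Copp a = - a. Proof. by []. Qed.
Lemma CmulE (a b : Cx) : Cmul a b = a * b. Proof. by []. Qed.

Lemma CscalE r (a : Cx) : Cscal r a = RtoC r * a.
Proof. by case: a => a b; rewrite -CmulE /Cscal /Cmul /RtoC /=; f_equal; ring. Qed.
Lemma RtoC_add r s : RtoC (Rplus r s) = RtoC r + RtoC s.
Proof. by rewrite -CaddE /Cadd /RtoC /=; f_equal; ring. Qed.
Lemma RtoC_mul r s : RtoC (Rmult r s) = RtoC r * RtoC s.
Proof. by rewrite -CmulE /Cmul /RtoC /=; f_equal; ring. Qed.
Lemma RtoC_opp r : RtoC (Ropp r) = - RtoC r.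
Proof. by rewrite -CoppE /Copp /RtoC /=; f_equal; ring. Qed.

Import ring.

Lemma RtoC_nat n : RtoC (INR n) = n%:R.
Proof. by elim: n => [|n IH] //; rewrite S_INR RtoC_add IH -natr1. Qed.
Lemma RtoC_pow r n : RtoC (pow r n) = RtoC r ^+ n.
Proof. by elim: n => [|n IH] //=; rewrite RtoC_mul IH exprS. Qed.

Lemma CsumE (F : nat -> Cx) n : Csum F n = \sum_(i < n.+1) F i.
Proof. by elim: n => [|n IH] /=; rewrite ?big_ord1 // big_ord_recr /= IH. Qed.

Definition fps_zero : fps := fun _ => 0.
Definition fps_opp (f : fps) : fps := fun n => - f n.

Lemma fps_addA : associative fps_add.
Proof. by move=> f g h; apply: functional_extensionality => n; exact: addrA. Qed.
Lemma fps_addC : commutative fps_add.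
Proof. by move=> f g; apply: functional_extensionality => n; exact: addrC. Qed.
Lemma fps_add0 : left_id fps_zero fps_add.
Proof. by move=> f; apply: functional_extensionality => n; exact: add0r. Qed.
Lemma fps_addN : left_inverse fps_zero fps_opp fps_add.
Proof. by move=> f; apply: functional_extensionality => n; exact: addNr. Qed.

HB.instance Definition _ := boolp.gen_eqMixin fps.
HB.instance Definition _ := boolp.gen_choiceMixin fps.
HB.instance Definition _ := GRing.isZmodule.Build fps fps_addA fps_addC fps_add0 fps_addN.

Lemma fps_mulE (f g : fps) n : fps_mul f g n = \sum_(i < n.+1) f i * g (n - i)%N.
Proof. exact: CsumE. Qed.

(* The coefficient of t^m in a product only involves coefficients up to m, so the
   ring laws of formal power series are inherited from {poly Cx} by truncation. *)
Definition fps_trunc (N : nat) (f : fps) : {poly Cx} := \poly_(i < N) f i.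

Lemma coef_fps_trunc N f i : (i < N)%N -> (fps_trunc N f)`_i = f i.
Proof. by move=> lt_iN; rewrite coef_poly lt_iN. Qed.

Lemma coef_fps_trunc_le (f : fps) {N m} :
  (m < N)%N -> forall i, (i <= m)%N -> (fps_trunc N f)`_i = f i.
Proof. by move=> lt_mN i le_im; rewrite coef_fps_trunc // (leq_ltn_trans le_im). Qed.

Lemma fps_mul_poly {f g : fps} {p r : {poly Cx}} {m} :
    (forall i, (i <= m)%N -> p`_i = f i) -> (forall i, (i <= m)%N -> r`_i = g i) ->
  fps_mul f g m = (p * r)`_m.
Proof.
move=> pf rg; rewrite fps_mulE coefM; apply: eq_bigr => i _.
by rewrite pf ?rg ?leq_subr // -ltnS.
Qed.

Lemma fps_mul_coef_trunc (f g : fps) N m :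
  (m < N)%N -> fps_mul f g m = (fps_trunc N f * fps_trunc N g)`_m.
Proof. by move=> lt_mN; apply: fps_mul_poly; apply: coef_fps_trunc_le. Qed.

Lemma fps_mulC : commutative fps_mul.
Proof.
move=> f g; apply: functional_extensionality => n.
by rewrite !(@fps_mul_coef_trunc _ _ n.+1) // mulrC.
Qed.

Lemma fps_mulA : associative fps_mul.
Proof.
move=> f g h; apply: functional_extensionality => n.
rewrite (@fps_mul_poly _ _ (fps_trunc n.+1 f) (fps_trunc n.+1 g * fps_trunc n.+1 h)).
- rewrite (@fps_mul_poly _ _ (fps_trunc n.+1 f * fps_trunc n.+1 g) (fps_trunc n.+1 h)) ?mulrA //.
    by move=> i le_in; rewrite -fps_mul_coef_trunc // ltnS.
  exact: coef_fps_trunc_le.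
- exact: coef_fps_trunc_le.
- by move=> i le_in; rewrite -fps_mul_coef_trunc // ltnS.
Qed.

Lemma fps_mul1 : left_id fps_one fps_mul.
Proof.
move=> f; apply: functional_extensionality => n.
rewrite fps_mulE big_ord_recl subn0 big1 ?addr0; first exact: mul1r.
by move=> i _; exact: mul0r.
Qed.

Lemma fps_mulDl : left_distributive fps_mul fps_add.
Proof.
move=> f g h; apply: functional_extensionality => n.
rewrite /fps_add !fps_mulE CaddE -big_split.
by apply: eq_bigr => i _; exact: mulrDl.
Qed.

Lemma fps_one_neq0 : fps_one != fps_zero.
Proof. by apply/eqP => /(congr1 (fun f => f 0%N)) /eqP; rewrite (negbTE C1_neq0). Qed.

HB.instance Definition _ :=
  GRing.Zmodule_isComNzRing.Build fps fps_mulA fps_mulC fps_mul1 fps_mulDl fps_one_neq0.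

Lemma fps_mulr (f g : fps) : fps_mul f g = f * g. Proof. by []. Qed.
Lemma fps_oneE : fps_one = 1. Proof. by []. Qed.
Lemma fps_subr (f g : fps) : fps_sub f g = f - g. Proof. by []. Qed.

Lemma fps_powE (f : fps) j : fps_pow f j = f ^+ j.
Proof. by elim: j => [|j IH] //=; rewrite exprSr IH. Qed.

Lemma fps_coef_zero n : (0 : fps) n = 0. Proof. by []. Qed.
Lemma fps_coefD (f g : fps) n : (f + g) n = f n + g n. Proof. by []. Qed.
Lemma fps_coefN (f : fps) n : (- f) n = - f n. Proof. by []. Qed.
Lemma fps_coefB (f g : fps) n : (f - g) n = f n - g n. Proof. by []. Qed.

Lemma fps_coef_sum I (r : seq I) (P : pred I) (F : I -> fps) n :
  (\sum_(i <- r | P i) F i) n = \sum_(i <- r | P i) F i n.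
Proof. by apply: (big_morph (fun f : fps => f n)). Qed.

Lemma fps_coef_constM c (f : fps) n : (fps_const c * f) n = c * f n.
Proof.
rewrite -fps_mulr fps_mulE big_ord_recl subn0 big1 ?addr0 // => i _.
exact: mul0r.
Qed.

Lemma fps_const_mul c d : fps_const (c * d) = fps_const c * fps_const d.
Proof.
apply: functional_extensionality => n; rewrite fps_coef_constM.
by case: n => [|n] /=; rewrite ?mulr0.
Qed.

Lemma fps_const_add c d : fps_const (c + d) = fps_const c + fps_const d.
Proof. by apply: functional_extensionality => -[|n]; rewrite fps_coefD /= ?addr0. Qed.

Lemma fps_const_opp c : fps_const (- c) = - fps_const c.
Proof. by apply: functional_extensionality => -[|n]; rewrite fps_coefN /= ?oppr0. Qed.

Lemma fps_const_nat m : fps_const m%:R = m%:R.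
Proof.
elim: m => [|m IH]; last by rewrite !mulrS fps_const_add IH.
by apply: functional_extensionality => -[].
Qed.

Lemma fps_const_exp c j : fps_const (c ^+ j) = fps_const c ^+ j.
Proof. by elim: j => [|j IH] //; rewrite !exprS fps_const_mul IH. Qed.

Lemma fps_cscalE c (f : fps) : fps_cscal c f = fps_const c * f.
Proof. by apply: functional_extensionality => n; rewrite fps_coef_constM. Qed.

Lemma fps_rscalE r (f : fps) : fps_rscal r f = fps_const (RtoC r) * f.
Proof. by apply: functional_extensionality => n; rewrite fps_coef_constM /fps_rscal CscalE. Qed.

Lemma fps_coef_XM (f : fps) n : (fps_X * f) n = if n is n'.+1 then f n' else 0.
Proof.
rewrite -fps_mulr fps_mulE; case: n => [|n]; first by rewrite big_ord1 mul0r.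
rewrite big_ord_recl big_ord_recl big1 /=.
  by rewrite mul0r mul1r subn1 addr0 add0r.
by move=> i _; rewrite mul0r.
Qed.

Definition fps_deriv (f : fps) : fps := fun n => n.+1%:R * f n.+1.

Lemma fps_derivD (f g : fps) : fps_deriv (f + g) = fps_deriv f + fps_deriv g.
Proof. by apply: functional_extensionality => n; rewrite /fps_deriv !fps_coefD mulrDr. Qed.

Lemma fps_derivN (f : fps) : fps_deriv (- f) = - fps_deriv f.
Proof. by apply: functional_extensionality => n; rewrite /fps_deriv !fps_coefN mulrN. Qed.

Lemma fps_derivB (f g : fps) : fps_deriv (f - g) = fps_deriv f - fps_deriv g.
Proof. by rewrite fps_derivD fps_derivN. Qed.

Lemma fps_deriv_const c : fps_deriv (fps_const c) = 0.
Proof. by apply: functional_extensionality => n; rewrite /fps_deriv /= mulr0. Qed.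

Lemma fps_deriv1 : fps_deriv 1 = 0.
Proof. exact: fps_deriv_const. Qed.

Lemma fps_derivX : fps_deriv fps_X = 1.
Proof. by apply: functional_extensionality => -[|n]; rewrite /fps_deriv /= ?mulr1 ?mulr0. Qed.

Lemma coef_deriv_fps_trunc N (f : fps) i : (i.+1 < N)%N -> ((fps_trunc N f)^`())`_i = fps_deriv f i.
Proof. by move=> lt_iN; rewrite coef_deriv coef_fps_trunc // /fps_deriv mulr_natl. Qed.

Lemma fps_derivM (f g : fps) : fps_deriv (f * g) = fps_deriv f * g + f * fps_deriv g.
Proof.
apply: functional_extensionality => n; rewrite fps_coefD -!fps_mulr.
have ltn2 : (n < n.+2)%N by rewrite ltnW.
have trunc_deriv h : forall i, (i <= n)%N -> ((fps_trunc n.+2 h)^`())`_i = fps_deriv h i.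
  by move=> i le_in; rewrite coef_deriv_fps_trunc // !ltnS.
rewrite (fps_mul_poly (trunc_deriv f) (coef_fps_trunc_le g ltn2)).
rewrite (fps_mul_poly (coef_fps_trunc_le f ltn2) (trunc_deriv g)).
by rewrite -coefD -derivM coef_deriv /fps_deriv (@fps_mul_coef_trunc _ _ n.+2) // mulr_natl.
Qed.

Lemma fps_deriv_constM c (f : fps) : fps_deriv (fps_const c * f) = fps_const c * fps_deriv f.
Proof. by rewrite fps_derivM fps_deriv_const mul0r add0r. Qed.

Lemma fps_derivXn (f : fps) j : fps_deriv (f ^+ j.+1) = j.+1%:R * fps_deriv f * f ^+ j.
Proof.
elim: j => [|j IH]; first by rewrite expr1 expr0 mulr1 mul1r.
by rewrite exprSr fps_derivM IH exprSr; ring.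
Qed.

Lemma sum_ord_widen (F : nat -> Cx) a b : (a <= b)%N -> (forall j, (a <= j)%N -> F j = 0) ->
  \sum_(j < a) F j = \sum_(j < b) F j.
Proof.
move=> le_ab F0; rewrite (big_ord_widen _ _ le_ab) big_mkcond.
by apply: eq_bigr => j _; case: ltnP => // /F0 ->.
Qed.

Lemma eq_fps_mul_coef (f f' g g' : fps) n :
    (forall i, (i <= n)%N -> f i = f' i) -> (forall i, (i <= n)%N -> g i = g' i) ->
  (f * g) n = (f' * g') n.
Proof.
move=> ff' gg'; rewrite -!fps_mulr !fps_mulE; apply: eq_bigr => i _.
by rewrite ff' ?gg' ?leq_subr // -ltnS.
Qed.

Lemma fps_pow_coef_small (f : fps) j n : f 0%N = 0 -> (n < j)%N -> (f ^+ j) n = 0.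
Proof.
move=> f0; elim: j n => [|j IH] n // lt_nj.
rewrite exprSr -fps_mulr fps_mulE; apply: big1 => i _.
have [lt_ij | le_ji] := ltnP i j; first by rewrite IH // mul0r.
have -> : (n - i = 0)%N by apply/eqP; rewrite subn_eq0 (leq_trans _ le_ji) // -ltnS.
by rewrite f0 mulr0.
Qed.

Definition invfact j : Cx := RtoC (/ INR (fact j)).

Lemma invfact0 : invfact 0 = 1.
Proof. by rewrite /invfact /= Rinv_1. Qed.

Lemma invfactS j : j.+1%:R * invfact j.+1 = invfact j.
Proof. by rewrite /invfact -RtoC_nat -RtoC_mul INR_fact_succ_inv. Qed.

Definition comp_partial (c : nat -> R) (f : fps) N : fps :=
  \sum_(j < N) fps_const (RtoC (c j)) * f ^+ j.

Lemma coef_comp_partial (c : nat -> R) (f : fps) N n : f 0%N = 0 -> (n < N)%N ->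
  Csum (fun j => Cscal (c j) (fps_pow f j n)) n = comp_partial c f N n.
Proof.
move=> f0 lt_nN; rewrite CsumE /comp_partial fps_coef_sum.
under eq_bigr => j _ do rewrite CscalE fps_powE.
rewrite (sum_ord_widen (fun j => RtoC (c j) * (f ^+ j) n) _ _ lt_nN).
  by apply: eq_bigr => j _; rewrite fps_coef_constM.
by move=> j le_nj; rewrite fps_pow_coef_small ?mulr0.
Qed.

Definition exp_partial (f : fps) N : fps := \sum_(j < N) fps_const (invfact j) * f ^+ j.

Lemma fps_exp_partial (f : fps) N n : f 0%N = 0 -> (n < N)%N -> fps_exp f n = exp_partial f N n.
Proof. exact: (coef_comp_partial (fun j => / INR (fact j))). Qed.

Lemma fps_deriv_sum I (r : seq I) (P : pred I) (F : I -> fps) :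
  fps_deriv (\sum_(i <- r | P i) F i) = \sum_(i <- r | P i) fps_deriv (F i).
Proof.
apply: (big_morph fps_deriv fps_derivD).
by apply: functional_extensionality => n; rewrite /fps_deriv mulr0.
Qed.

Lemma fps_deriv_exp_partial (f : fps) N :
  fps_deriv (exp_partial f N.+1) = fps_deriv f * exp_partial f N.
Proof.
rewrite /exp_partial fps_deriv_sum big_ord_recl expr0 mulr1 fps_deriv_const add0r.
rewrite mulr_sumr; apply: eq_bigr => j _; rewrite lift0 fps_deriv_constM fps_derivXn.
rewrite -[invfact j]invfactS fps_const_mul fps_const_nat; ring.
Qed.

Lemma fps_deriv_exp (f : fps) : f 0%N = 0 -> fps_deriv (fps_exp f) = fps_deriv f * fps_exp f.
Proof.
move=> f0; apply: functional_extensionality => n.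
transitivity (fps_deriv (exp_partial f n.+2) n).
  by rewrite /fps_deriv (@fps_exp_partial _ n.+2).
rewrite fps_deriv_exp_partial; apply: eq_fps_mul_coef => // i le_in.
by rewrite (@fps_exp_partial _ n.+1).
Qed.

Lemma fps_exp_coef0 (f : fps) : fps_exp f 0%N = 1.
Proof. by rewrite /fps_exp /= CscalE /= Rinv_1 mul1r. Qed.

Lemma fps_coef0M (f g : fps) : (f * g) 0%N = f 0%N * g 0%N.
Proof. by rewrite -fps_mulr fps_mulE big_ord1. Qed.

Lemma fps_coef_deriv_Euler (f : fps) n :
  fps_deriv f n = ((1 - fps_X) * fps_deriv f) n + n%:R * f n.
Proof.
rewrite mulrBl mul1r fps_coefB fps_coef_XM.
by case: n => [|n]; rewrite ?mul0r ?subr0 ?addr0 // subrK.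
Qed.

Definition divpow (h : fps) m : fps := fps_const (invfact m) * h ^+ m.

Lemma divpowE (h : fps) m : fps_rscal (/ INR (fact m)) (fps_pow h m) = divpow h m.
Proof. by rewrite fps_rscalE fps_powE. Qed.

Lemma divpow0 (h : fps) : divpow h 0 = 1.
Proof. by rewrite /divpow invfact0 expr0 mulr1. Qed.

Lemma fps_deriv_divpow (h : fps) m : fps_deriv (divpow h m.+1) = fps_deriv h * divpow h m.
Proof.
rewrite fps_deriv_constM fps_derivXn /divpow -[invfact m]invfactS.
by rewrite fps_const_mul fps_const_nat; ring.
Qed.

Lemma divpow_mulS (h : fps) m : divpow h m * h = m.+1%:R * divpow h m.+1.
Proof. by rewrite /divpow -[invfact m]invfactS fps_const_mul fps_const_nat exprSr; ring. Qed.

Definition egf_coef (f : fps) n : Cx := RtoC (INR (fact n)) * f n.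

Lemma egf_coefS (f : fps) n : egf_coef f n.+1 = egf_coef (fps_deriv f) n.
Proof.
by rewrite /egf_coef /fps_deriv fact_simpl mult_INR RtoC_mul RtoC_nat mulrA [_ * n.+1%:R]mulrC.
Qed.

Lemma egf_coef0_exp_divpow (f h : fps) m : h 0%N = 0 ->
  egf_coef (fps_exp f * divpow h m) 0 = (m == 0)%:R.
Proof.
move=> h0; rewrite /egf_coef /= mul1r fps_coef0M fps_exp_coef0 mul1r /divpow fps_coef_constM.
case: m => [|m]; first by rewrite invfact0 expr0 mul1r.
by rewrite fps_pow_coef_small ?mulr0.
Qed.

Section Stirling2.
Variable x : Cx.
Let E := fps_exp (fps_const x * fps_X).
Let H := fps_exp fps_X - 1.
Let P m := E * divpow H m.

Lemma S2wE n m : S2w n m x = egf_coef (P m) n.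
Proof. by rewrite /S2w CscalE fps_cscalE divpowE. Qed.

Lemma S2w_0 m : S2w 0 m x = (m == 0)%:R.
Proof. by rewrite S2wE egf_coef0_exp_divpow // /H fps_coefB fps_exp_coef0 subrr. Qed.

Lemma deriv_S2_exp : fps_deriv E = fps_const x * E.
Proof.
rewrite fps_deriv_exp ?fps_deriv_constM ?fps_derivX ?mulr1 //.
by rewrite fps_coef_constM mulr0.
Qed.

Lemma deriv_S2_base : fps_deriv H = H + 1.
Proof.
by rewrite fps_derivB fps_deriv_exp // fps_derivX mul1r fps_deriv1 subr0 subrK.
Qed.

Lemma deriv_S2_gf m :
  fps_deriv (P m) = fps_const (x + m%:R) * P m + (if m is m'.+1 then P m' else 0).
Proof.
rewrite /P fps_derivM deriv_S2_exp fps_const_add fps_const_nat.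
case: m => [|m]; first by rewrite divpow0 fps_deriv1; ring.
rewrite fps_deriv_divpow deriv_S2_base mulrDl mul1r [H * _]mulrC divpow_mulS; ring.
Qed.

Lemma S2w_succ n m :
  S2w n.+1 m x = (x + m%:R) * S2w n m x + (if m is m'.+1 then S2w n m' x else 0).
Proof.
rewrite !S2wE egf_coefS deriv_S2_gf /egf_coef fps_coefD fps_coef_constM.
by case: m => [|m]; rewrite ?fps_coef_zero ?S2wE /egf_coef; ring.
Qed.
End Stirling2.

Lemma deriv_mlog1m : (1 - fps_X) * fps_deriv fps_mlog1m = 1.
Proof.
have -> : fps_deriv fps_mlog1m = fun _ => 1.
  apply: functional_extensionality => n.
  by rewrite /fps_deriv /= -RtoC_nat -RtoC_mul Rinv_r //; apply: not_0_INR.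
apply: functional_extensionality => n.
by rewrite mulrBl mul1r fps_coefB fps_coef_XM; case: n => [|n]; rewrite ?subr0 ?subrr.
Qed.

Section Stirling1.
Variable x : Cx.
Let L := fps_mlog1m.
Let E := fps_exp (fps_const x * L).
Let Q m := E * divpow L m.

Lemma S1wE n m : S1w n m x = egf_coef (Q m) n.
Proof. by rewrite /S1w CscalE fps_cscalE divpowE. Qed.

Lemma S1w_0 m : S1w 0 m x = (m == 0)%:R.
Proof. by rewrite S1wE egf_coef0_exp_divpow. Qed.

Lemma deriv_S1_gf m : (1 - fps_X) * fps_deriv (Q m) =
  fps_const x * Q m + (if m is m'.+1 then Q m' else 0).
Proof.
have derivE : fps_deriv E = fps_const x * fps_deriv L * E.
  rewrite fps_deriv_exp ?fps_deriv_constM //.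
  by rewrite fps_coef_constM mulr0.
rewrite /Q fps_derivM derivE mulrDr.
have -> : forall a b c : fps, (1 - fps_X) * (a * fps_deriv L * b * c) =
  (1 - fps_X) * fps_deriv L * (a * (b * c)) by move=> *; ring.
rewrite deriv_mlog1m mul1r; congr (_ + _).
case: m => [|m]; first by rewrite divpow0 fps_deriv1 !mulr0.
have -> : forall b : fps, (1 - fps_X) * (b * fps_deriv (divpow L m.+1)) =
  (1 - fps_X) * fps_deriv L * (b * divpow L m) by move=> *; rewrite fps_deriv_divpow; ring.
by rewrite deriv_mlog1m mul1r.
Qed.

Lemma S1w_succ n m :
  S1w n.+1 m x = (n%:R + x) * S1w n m x + (if m is m'.+1 then S1w n m' x else 0).
Proof.
rewrite !S1wE egf_coefS /egf_coef fps_coef_deriv_Euler deriv_S1_gf fps_coefD fps_coef_constM.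
by case: m => [|m]; rewrite ?fps_coef_zero ?S1wE /egf_coef; ring.
Qed.
End Stirling1.

Lemma triangular_vanish (s : nat -> nat -> Cx) (a : nat -> nat -> Cx) :
    (forall m, s 0%N m = (m == 0)%:R) ->
    (forall n m, s n.+1 m = a n m * s n m + (if m is m'.+1 then s n m' else 0)) ->
  forall n m, (n < m)%N -> s n m = 0.
Proof.
move=> s0 sS; elim=> [|n IH] m lt_nm; first by rewrite s0; case: m lt_nm.
rewrite sS IH ?mulr0 ?add0r; last exact: ltnW.
by case: m lt_nm => [|m] // lt_nm; rewrite IH.
Qed.

Section StirlingIdentities.
Variable x : Cx.

Lemma S1w_small n m : (n < m)%N -> S1w n m x = 0.
Proof.
exact: (@triangular_vanish (fun n m => S1w n m x) (fun n _ => n%:R + x) (S1w_0 x) (S1w_succ x)).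
Qed.

Lemma S2w_small n m : (n < m)%N -> S2w n m x = 0.
Proof.
exact: (@triangular_vanish (fun n m => S2w n m x) (fun _ m => x + m%:R) (S2w_0 x) (S2w_succ x)).
Qed.

Lemma S2w_falling_factorial n y : \sum_(m < n.+1) S2w n m x * Cfall y m = (x + y) ^+ n.
Proof.
elim: n => [|n IH]; first by rewrite big_ord1 S2w_0 mul1r expr0.
under eq_bigr => m _ do rewrite S2w_succ mulrDl.
rewrite big_split /= big_ord_recr /= S2w_small // mulr0 mul0r addr0.
rewrite [X in _ + X]big_ord_recl /= mul0r add0r -big_split /= exprS -IH mulr_sumr.
by apply: eq_bigr => m _; rewrite add0n CmulE CsubE RtoC_nat; ring.
Qed.

Lemma S1w_S2w_orthogonal n j :
  \sum_(m < n.+1) (-1) ^+ m * S1w n m x * S2w m j x = (-1) ^+ n * (j == n)%:R.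
Proof.
elim: n j => [|n IH] j; first by rewrite big_ord1 S1w_0 S2w_0 /= mulr1.
have -> : \sum_(m < n.+2) (-1) ^+ m * S1w n.+1 m x * S2w m j x =
    (n%:R + x) * \sum_(m < n.+1) (-1) ^+ m * S1w n m x * S2w m j x
    - \sum_(m < n.+1) (-1) ^+ m * S1w n m x * S2w m.+1 j x.
  under eq_bigr => m _ do rewrite S1w_succ mulrDr mulrDl.
  rewrite big_split /= big_ord_recr /= S1w_small // !mulr0 mul0r addr0 mulr_sumr.
  rewrite (big_ord_recl n.+1) /= mulr0 mul0r add0r -sumrN.
  by congr (_ + _); apply: eq_bigr => m _; rewrite ?lift0 ?exprS; ring.
under [X in _ - X]eq_bigr => m _ do rewrite S2w_succ mulrDr [_ * ((x + _) * _)]mulrCA.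
rewrite big_split /= -mulr_sumr IH.
case: j => [|j].
  rewrite big1 => [|m _]; last by rewrite mulr0.
  by case: n {IH} => [|n] /=; ring.
rewrite IH eqSS exprS.
have [<-|_] := eqVneq j.+1 n; last by rewrite /=; ring.
by rewrite ltn_eqF // /=; ring.
Qed.
End StirlingIdentities.

Section Bernoulli.
Variables (rho : R) (z : Cx).
Hypothesis rho_neq0 : rho <> R0.
Let x := Cscal (/ rho) z.
Let a := RtoC (- rho).
Let w := fps_w rho.
Let e := fps_exp (fps_const (- z) * fps_X).
(* With u = a t, U j = e^{xu} (e^u - 1)^j / j! is the generating function of S2(., j, x)
   in the variable u, so each t-derivative contributes a factor a. *)
Let U j := e * divpow (fps_const a * w) j.

Lemma scaled_fps_w : fps_const a * w = fps_exp (fps_const a * fps_X) - 1.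
Proof.
rewrite /w /fps_w !fps_rscalE fps_subr mulrA -fps_const_mul -RtoC_mul opp_mul_inv //.
have -> : fps_const (RtoC (- (1))) = -1 by rewrite RtoC_opp fps_const_opp.
by rewrite -/a fps_oneE; ring.
Qed.

Lemma scaled_fps_w_coef0 : (fps_const a * w) 0%N = 0.
Proof. by rewrite scaled_fps_w fps_coefB fps_exp_coef0 subrr. Qed.

Lemma deriv_scaled_fps_w : fps_deriv (fps_const a * w) = fps_const a * (fps_const a * w + 1).
Proof.
rewrite scaled_fps_w fps_derivB fps_deriv_exp ?fps_coef_constM ?mulr0 //.
by rewrite fps_deriv_constM fps_derivX fps_deriv1 subr0 subrK mulr1.
Qed.

Lemma deriv_exp_oppz : fps_deriv e = fps_const a * (fps_const x * e).
Proof.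
rewrite fps_deriv_exp ?fps_coef_constM ?mulr0 //.
rewrite fps_deriv_constM fps_derivX mulr1 mulrA -fps_const_mul /x CscalE mulrA -RtoC_mul.
by rewrite opp_mul_inv // RtoC_opp mulN1r.
Qed.

Lemma deriv_U j : fps_deriv (U j) =
  fps_const a * (fps_const (x + j%:R) * U j + (if j is j'.+1 then U j' else 0)).
Proof.
rewrite /U fps_derivM deriv_exp_oppz fps_const_add fps_const_nat.
case: j => [|j]; first by rewrite divpow0 fps_deriv1; ring.
set h := fps_const a * w; rewrite fps_deriv_divpow deriv_scaled_fps_w.
have -> : fps_const a * (h + 1) * divpow h j = fps_const a * (divpow h j * h + divpow h j) by ring.
by rewrite divpow_mulS; ring.
Qed.

Lemma egf_coef_U m j : egf_coef (U j) m = a ^+ m * S2w m j x.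
Proof.
elim: m j => [|m IH] j; first by rewrite egf_coef0_exp_divpow ?scaled_fps_w_coef0 // S2w_0 mul1r.
rewrite egf_coefS deriv_U /egf_coef fps_coef_constM fps_coefD fps_coef_constM S2w_succ exprS.
have -> : forall c u u' : Cx, RtoC (INR (fact m)) * (a * (c * u + u')) =
  a * (c * (RtoC (INR (fact m)) * u) + RtoC (INR (fact m)) * u') by move=> *; ring.
case: j => [|j]; rewrite ?fps_coef_zero ?mulr0 -!/(egf_coef _ _) !IH; ring.
Qed.

Lemma fps_w_pow_mul_exp j : w ^+ j * e = fps_const (RtoC (INR (fact j) * (- / rho) ^ j)) * U j.
Proof.
rewrite /U /divpow exprMn -fps_const_exp.
have -> : forall c : Cx, fps_const c * (e * (fps_const (invfact j) * (fps_const (a ^+ j) * w ^+ j)))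
  = fps_const (c * (invfact j * a ^+ j)) * (w ^+ j * e) by move=> c; rewrite !fps_const_mul; ring.
by rewrite /invfact /a -RtoC_pow -!RtoC_mul fact_pow_opp_inv_cancel // mul1r.
Qed.

Lemma Li_over_w_partial k q n N : (n < N)%N ->
  fps_Li_over_w k rho q n = comp_partial (fun j => / qnum q (S j) ^ k) w N n.
Proof.
apply: coef_comp_partial.
by rewrite /w /fps_w fps_rscalE fps_coef_constM fps_subr fps_coefB fps_exp_coef0 subrr mulr0.
Qed.

Lemma qpolyBernoulli_S2w k q m :
  Cscal (/ rho ^ m) (qpolyBernoulli m k rho q z) = \sum_(j < m.+1)
    RtoC (/ qnum q (S j) ^ k * (INR (fact j) * (- / rho) ^ j)) * ((-1) ^+ m * S2w m j x).
Proof.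
rewrite /qpolyBernoulli !CscalE fps_cscalE -/e fps_mulr.
rewrite (@eq_fps_mul_coef _ (comp_partial (fun j => / qnum q (S j) ^ k) w m.+1) _ e); last by [].
  rewrite /comp_partial mulr_suml fps_coef_sum !mulr_sumr; apply: eq_bigr => j _.
  rewrite -mulrA fps_w_pow_mul_exp !fps_coef_constM.
  have -> : (-1) ^+ m = RtoC (/ rho ^ m) * a ^+ m.
    by rewrite /a -RtoC_pow -RtoC_mul inv_pow_mul_opp_pow // RtoC_pow RtoC_opp.
  by rewrite -mulrA -egf_coef_U /egf_coef !RtoC_mul; ring.
by move=> i le_im; apply: Li_over_w_partial.
Qed.

End Bernoulli.

Lemma S1w_qpolyBernoulli_sum n k rho q z : rho <> R0 ->
  Csum (fun m => Cmul (S1w n m (Cscal (/ rho) z))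
                      (Cscal (/ rho ^ m) (qpolyBernoulli m k rho q z))) n
    = RtoC (INR (fact n) / (rho ^ n * qnum q (S n) ^ k)).
Proof.
move=> rho_neq0; set x := Cscal (/ rho) z.
set A := fun j => RtoC (/ qnum q (S j) ^ k * (INR (fact j) * (- / rho) ^ j)).
have expand (m : 'I_n.+1) : Cmul (S1w n m x) (Cscal (/ rho ^ m) (qpolyBernoulli m k rho q z)) =
    \sum_(j < n.+1) A j * ((-1) ^+ m * S1w n m x * S2w m j x).
  rewrite CmulE qpolyBernoulli_S2w // mulr_sumr.
  rewrite (sum_ord_widen (fun j => S1w n m x * (A j * ((-1) ^+ m * S2w m j x))) _ _ (ltn_ord m))
    => [|j lt_mj]; last first.
    by rewrite S2w_small ?mulr0.
  by apply: eq_bigr => j _; ring.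
rewrite CsumE (eq_bigr _ (fun m _ => expand m)) exchange_big /=.
under eq_bigr => j _ do rewrite -mulr_sumr S1w_S2w_orthogonal.
rewrite big_ord_recr big1 /= => [|j _]; last by rewrite ltn_eqF ?mulr0.
have -> : (-1) ^+ n = RtoC ((-1) ^ n) :> Cx by rewrite RtoC_pow RtoC_opp.
by rewrite eqxx mulr1 add0r /A -RtoC_mul fact_pow_opp_inv_sign.
Qed.

Lemma S2w_qpolyCauchy1_integrand n rho z P :
  Csum (fun m => Cmul (S2w n m (Cscal (/ rho) z)) (Cfall (Cscal (/ rho) (Csub (RtoC P) z)) m)) n
  = Cscal (P ^ n) (RtoC (/ rho ^ n)).
Proof.
rewrite CsumE S2w_falling_factorial !CscalE CsubE.
have -> : RtoC (/ rho) * z + RtoC (/ rho) * (RtoC P - z) = RtoC (/ rho) * RtoC P by ring.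
by rewrite -RtoC_mul -RtoC_pow -RtoC_mul Rpow_mult_distr pow_inv Rmult_comm.
Qed.

Lemma S2w_qpolyCauchy2_integrand n rho z P :
  Csum (fun m => Cmul (S2w n m (Copp (Cscal (/ rho) z)))
                      (Cfall (Cscal (/ rho) (Csub z (RtoC P))) m)) n
  = Cscal (P ^ n) (RtoC ((-1) ^ n / rho ^ n)).
Proof.
rewrite CsumE S2w_falling_factorial !CscalE CsubE CoppE.
have -> : - (RtoC (/ rho) * z) + RtoC (/ rho) * (z - RtoC P) = - (RtoC (/ rho) * RtoC P) by ring.
by rewrite -RtoC_mul -RtoC_opp -RtoC_pow -RtoC_mul pow_opp_inv_mul.
Qed.

End FormalSeries.

Import JacksonIntegral.

Lemma Cscal_inv_cancel r v : r <> 0 -> Cscal (/ r) (Cscal r v) = v.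
Proof.
intros; rewrite Cscal_Cscal, Rinv_l by assumption.
destruct v; unfold Cscal; simpl; f_equal; ring.
Qed.

Lemma Cscal_RtoC r s : Cscal r (RtoC s) = RtoC (r * s).
Proof. unfold Cscal, RtoC; simpl; f_equal; ring. Qed.

Lemma S2w_sum_jackson_multi n k rho q (x : Cx) (y : R -> Cx) (c : Cx) :
  0 <= q < 1 -> rho <> 0 -> bounded01 y ->
  (forall P, Csum (fun m => Cmul (S2w n m x) (Cfall (y P) m)) n = Cscal (P ^ n) c) ->
  Csum (fun m => Cmul (S2w n m x)
    (Cscal (/ rho ^ m) (Cscal (rho ^ m) (jackson_multi q k (fun P => Cfall (y P) m))))) n
  = Cscal (/ qnum q (S n) ^ k) c.
Proof.
intros Hq Hrho Hy Hsum.
transitivity (Csum (fun m => Cmul (S2w n m x) (jackson_multi q k (fun P => Cfall (y P) m))) n).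
{ f_equal; apply functional_extensionality; intros m.
  rewrite Cscal_inv_cancel; [reflexivity|apply pow_nonzero, Hrho]. }
rewrite <- (jackson_multi_sum q Hq k (fun m P => Cfall (y P) m))
  by (intros m; apply bounded01_Cfall, Hy).
rewrite <- (jackson_multi_monomial q Hq k n c).
f_equal; apply functional_extensionality; exact Hsum.
Qed.

Lemma S2w_qpolyCauchy1_sum n k rho q z : rho <> 0 -> 0 <= q < 1 ->
  Csum (fun m => Cmul (S2w n m (Cscal (/ rho) z))
                      (Cscal (/ rho ^ m) (qpolyCauchy1 m k rho q z))) n
    = RtoC (1 / (rho ^ n * (qnum q (S n)) ^ k)).
Proof.
intros Hrho Hq; unfold qpolyCauchy1.
rewrite (S2w_sum_jackson_multi n k rho q _ (fun P => Cscal (/ rho) (Csub (RtoC P) z))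
  (RtoC (/ rho ^ n)) Hq Hrho).
- rewrite Cscal_RtoC; unfold Rdiv; rewrite Rinv_mult; f_equal; ring.
- apply bounded01_scal, bounded01_sub; [apply bounded01_RtoC|apply bounded01_const].
- apply FormalSeries.S2w_qpolyCauchy1_integrand.
Qed.

Lemma S2w_qpolyCauchy2_sum n k rho q z : rho <> 0 -> 0 <= q < 1 ->
  Csum (fun m => Cmul (S2w n m (Copp (Cscal (/ rho) z)))
                      (Cscal (/ rho ^ m) (qpolyCauchy2 m k rho q z))) n
    = RtoC ((-1) ^ n / (rho ^ n * (qnum q (S n)) ^ k)).
Proof.
intros Hrho Hq; unfold qpolyCauchy2.
rewrite (S2w_sum_jackson_multi n k rho q _ (fun P => Cscal (/ rho) (Csub z (RtoC P)))
  (RtoC ((-1) ^ n / rho ^ n)) Hq Hrho).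
- rewrite Cscal_RtoC; unfold Rdiv; rewrite Rinv_mult; f_equal; ring.
- apply bounded01_scal, bounded01_sub; [apply bounded01_const|apply bounded01_RtoC].
- apply FormalSeries.S2w_qpolyCauchy2_integrand.
Qed.

Theorem theorem6 (n k : nat) (rho q : R) (z : Cx) :
  (1 <= k)%nat -> rho <> 0 -> 0 <= q < 1 ->
  Csum (fun m => Cmul (S1w n m (Cscal (/ rho) z))
                      (Cscal (/ rho ^ m) (qpolyBernoulli m k rho q z))) n
    = RtoC (INR (fact n) / (rho ^ n * (qnum q (S n)) ^ k))
  /\
  Csum (fun m => Cmul (S2w n m (Cscal (/ rho) z))
                      (Cscal (/ rho ^ m) (qpolyCauchy1 m k rho q z))) n
    = RtoC (1 / (rho ^ n * (qnum q (S n)) ^ k))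
  /\
  Csum (fun m => Cmul (S2w n m (Copp (Cscal (/ rho) z)))
                      (Cscal (/ rho ^ m) (qpolyCauchy2 m k rho q z))) n
    = RtoC ((-1) ^ n / (rho ^ n * (qnum q (S n)) ^ k)).
Proof.
(* The identities hold for every k. *)
intros _ Hrho Hq; split; [|split].
- exact (FormalSeries.S1w_qpolyBernoulli_sum n k rho q z Hrho).
- exact (S2w_qpolyCauchy1_sum n k rho q z Hrho Hq).
- exact (S2w_qpolyCauchy2_sum n k rho q z Hrho Hq).
Qed.
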